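(* Let $\mu$ be the Cauchy distribution $d\mu(x)=\frac1\pi\frac{dx}{1+x^2}$ and $t>0$. Then \[\varphi_t(u)=\frac{4t}{\sqrt{u^2+1}\,\big(\sqrt{u^2+1}+\sqrt{u^2+1+4t}\big)},\qquad u\in\mathbb R.\]
   Context: $v_t(u)=\inf\{v>0:\int\frac{d\mu(x)}{(u-x)^2+v^2}\le\frac1t\}$; $H_{-t}(z)=z-t\int\frac{d\mu(x)}{z-x}$; $f_t(u_0)=\mathrm{Re}[H_{-t}(u_0+iv_t(u_0))]$, a strictly increasing homeomorphism of $\mathbb R$; $\varphi_t(u)=2v_t(f_t^{-1}(u))$. *)

From mathcomp Require Import all_boot all_order all_algebra.
From mathcomp Require Import all_classical all_reals all_analysis.
Set Implicit Arguments. Unset Strict Implicit. Unset Printing Implicit Defensive.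
Import Order.TTheory GRing.Theory Num.Theory.
Local Open Scope classical_set_scope.
Local Open Scope ring_scope.

Section defs.
Variable R : realType.

Definition cauchy_int (g : R -> R) : R :=
  fine (\int[@lebesgue_measure R]_x ((g x) * (pi * (1 + x ^+ 2))^-1)%:E)%E.

(* Below, I : (R -> R) -> R stands for g |-> \int g(x) dmu(x). *)

Definition v_t (I : (R -> R) -> R) (t u : R) : R :=
  inf [set v : R | 0 < v /\ I (fun x => ((u - x) ^+ 2 + v ^+ 2)^-1) <= t^-1].

(* Re[H_{-t}(a + i b)] = a - t \int (a - x) / ((a - x)^2 + b^2) dmu(x),
   since Re (1/(a + i b - x)) = (a - x)/((a - x)^2 + b^2). *)
Definition ReH (I : (R -> R) -> R) (t a b : R) : R :=
  a - t * I (fun x => (a - x) / ((a - x) ^+ 2 + b ^+ 2)).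

Definition f_t (I : (R -> R) -> R) (t u0 : R) : R := ReH I t u0 (v_t I t u0).

(* f_t^{-1}(u): the (unique, f_t being a bijection) preimage of u, chosen by [xget] *)
Definition f_t_inv (I : (R -> R) -> R) (t u : R) : R :=
  xget 0 [set u0 : R | f_t I t u0 = u].

Definition phi_t (I : (R -> R) -> R) (t u : R) : R := 2 * v_t I t (f_t_inv I t u).

End defs.

(* The Cauchy distribution has Cauchy transform [G(z) = 1 / (z + i)] on the
   upper half-plane.  For [z = a + ib] the integral in the definition of [v_t]
   is [- Im G(z) / b = (b + 1) / (b ((b + 1)^2 + a^2))] and the one in
   [Re H_{-t}] is [Re G(z) = a / (a^2 + (b + 1)^2)]; both are obtained from
   explicit antiderivatives (partial fractions in the poles [±i], [a ± ib]).
   Hence [v_t(a)] is the unique positive root [v] of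
   [v ((v + 1)^2 + a^2) = t (v + 1)], and [f_t(a) = a / (v + 1)].  So
   [f_t(a) = u] forces [a = u (v + 1)], the cubic factors as
   [(v + 1) (v (v + 1) (u^2 + 1) - t)], and [v_t(f_t^{-1}(u))] is the positive
   root of [v (v + 1) (u^2 + 1) = t], which is [phi_t(u) / 2]. *)

From mathcomp Require Import all_boot all_order all_algebra.
From mathcomp Require Import all_classical all_reals all_analysis.
From mathcomp Require Import measurable_realfun ring lra.
Set Implicit Arguments. Unset Strict Implicit. Unset Printing Implicit Defensive.
Import Order.TTheory GRing.Theory Num.Theory.
Import numFieldNormedType.Exports.
Local Open Scope classical_set_scope.
Local Open Scope ring_scope.

Section improper_FTC.
Context {R : realType}.
Notation mu := (@lebesgue_measure R).

Lemma continuous_of_derivable (F : R -> R) :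
  (forall x, derivable F x 1) -> continuous F.
Proof. by move=> dF x; apply: differentiable_continuous; exact/derivable1_diffP. Qed.

Lemma ge0_continuous_FTC2T (f F : R -> R) (l1 l0 : R) :
  (forall x : R, 0 <= f x) -> continuous f -> (forall x : R, is_derive x 1 F (f x)) ->
  F x @[x --> +oo] --> l1 -> F x @[x --> -oo] --> l0 ->
  (\int[mu]_x (f x)%:E = (l1 - l0)%:E)%E.
Proof.
move=> f0 cf dF Fl1 Fl0.
have mf : measurable_fun [set: R] f by exact: continuous_measurable_fun.
have mge0 : measurable [set x : R | 0 <= x] by rewrite -set_itvcy.
have cF : continuous F by apply: continuous_of_derivable => x; have [] := dF x.
have dFN (x : R) : is_derive x 1 (fun y => - F (- y)) (f (- x)).
  by have := is_deriveN (is_derive1_comp (dF (- x)) (is_deriveNid x 1));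
    rewrite mulrN1 opprK.
rewrite -(setUv [set x : R | 0 <= x]) ge0_integral_setU//=; last 4 first.
- exact: measurableC.
- by apply/measurable_EFinP; rewrite setUv.
- by move=> x _; rewrite lee_fin.
- exact/disj_setPCl.
rewrite -set_itvcy// setCitvr.
rewrite integral_itv_bndo_bndc; last exact/measurable_EFinP/measurable_funTS.
rewrite -{2}oppr0 ge0_integration_by_substitutionNy//; last first.
  exact: continuous_subspaceT.
rewrite (@ge0_continuous_FTC2y _ f F 0 l1); first last.
- by move=> x _; rewrite derive1E derive_val.
- exact: cvg_at_right_filter (cF 0).
- by move=> x _; have [] := dF x.
- exact: Fl1.
- exact: continuous_subspaceT.
- by move=> x _; exact: f0.
rewrite (@ge0_continuous_FTC2y _ (f \o -%R) (fun x => - F (- x)) 0 (- l0))/=;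
  first last.
- by move=> x _; rewrite derive1E derive_val.
- apply: cvg_at_right_filter; apply: cvgN.
  by apply: (@continuous_comp _ _ _ -%R F); [exact: oppr_continuous | exact: cF].
- by move=> x _; have [] := dFN x.
- by apply: cvgN; apply/cvgNy_compNP.
- apply: continuous_subspaceT => x.
  by apply: (@continuous_comp _ _ _ -%R f); [exact: oppr_continuous | exact: cf].
- by move=> x _; exact: f0.
by rewrite oppr0 -!EFinD; congr EFin; lra.
Qed.

Lemma cvgNy_atan : (@atan R) x @[x --> -oo] --> - (pi / 2).
Proof.
apply/cvgNy_compNP.
have -> : atan \o -%R = (fun x : R => - atan x) by apply/funext => x /=; rewrite atanN.
apply: cvgN; exact: cvgy_atan.
Qed.

(* Adding [M atan] to [F] reduces to the nonnegative case. *)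
Lemma continuous_FTC2T (f F : R -> R) (l1 l0 M : R) : 0 <= M ->
  (forall x, - (M / (1 + x ^+ 2)) <= f x) -> continuous f ->
  (forall x : R, is_derive x 1 F (f x)) ->
  F x @[x --> +oo] --> l1 -> F x @[x --> -oo] --> l0 ->
  (\int[mu]_x (f x)%:E = (l1 - l0)%:E)%E.
Proof.
move=> M0 fM cf dF Fl1 Fl0.
pose k x := M / (1 + x ^+ 2).
have k0 x : 0 <= k x by rewrite /k divr_ge0 // addr_ge0 // sqr_ge0.
have ck : continuous k.
  apply: continuous_of_derivable => x; apply: derivableM => //.
  by apply: derivableV => //; rewrite lt0r_neq0 // ltr_pwDl // sqr_ge0.
have dk (x : R) : is_derive x 1 (fun y => M * atan y) (k x) by exact: is_derive_eq.
have fk0 x : 0 <= f x + k x by have := fM x; rewrite /k; lra.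
have cfk : continuous (fun x => f x + k x) by move=> x; apply: cvgD; [exact: cf | exact: ck].
have ik : (\int[mu]_x (k x)%:E = (M * (pi / 2) - M * - (pi / 2))%:E)%E.
  apply: ge0_continuous_FTC2T => //.
  - by apply: cvgM; [exact: cvg_cst | exact: cvgy_atan].
  - by apply: cvgM; [exact: cvg_cst | exact: cvgNy_atan].
have ifk : (\int[mu]_x (f x + k x)%:E =
    (l1 + M * (pi / 2) - (l0 + M * - (pi / 2)))%:E)%E.
  apply: (ge0_continuous_FTC2T (F := fun x => F x + M * atan x)) => //.
  - by apply: cvgD => //; apply: cvgM; [exact: cvg_cst | exact: cvgy_atan].
  - by apply: cvgD => //; apply: cvgM; [exact: cvg_cst | exact: cvgNy_atan].
have integrable_ge0 (g : R -> R) v : (forall x, 0 <= g x) -> continuous g ->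
    (\int[mu]_x (g x)%:E = v%:E)%E -> mu.-integrable [set: R] (EFin \o g).
  move=> g0 cg ig; apply/integrableP; split.
    by apply/measurable_EFinP; exact: continuous_measurable_fun.
  by under eq_integral do rewrite /= ger0_norm ?g0 //; rewrite ig ltry.
transitivity (\int[mu]_x ((f x + k x)%:E - (k x)%:E))%E.
  by apply: eq_integral => x _; rewrite -EFinB addrK.
rewrite integralB_EFin //; last 2 first.
- exact: integrable_ge0 ifk.
- exact: integrable_ge0 ik.
by rewrite ifk ik; congr EFin; lra.
Qed.

End improper_FTC.

Section limits_at_infinity.
Context {R : realType}.

Lemma cvgy_rational (p q : {poly R}) (f : R -> R) : q.[0] != 0 ->
  (\forall x \near +oo, f x = p.[x^-1] / q.[x^-1]) ->
  f x @[x --> +oo] --> p.[0] / q.[0].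
Proof.
move=> q0 fE.
have cvgV0 : x^-1 @[x --> +oo] --> (0 : R).
  apply/gtr0_cvgV0; last exact: cvg_id.
  by near=> x; near: x; apply: nbhs_pinfty_gt.
have Ef : \forall x \near +oo, p.[x^-1] / q.[x^-1] = f x.
  by apply: filterS fE => x ->.
apply: cvg_trans (near_eq_cvg Ef) _.
have cpq : p.[y] / q.[y] @[y --> 0] --> p.[0] / q.[0].
  apply: (@cvgM _ _ _ _ (horner p) (fun y => (q.[y])^-1)).
    exact: continuous_horner.
  by apply: cvgV => //; exact: continuous_horner.
exact: cvg_comp cvgV0 cpq.
Unshelve. all: by end_near. Qed.

Lemma cvgy_lin_atan (a b : R) : 0 < b -> atan ((x - a) / b) @[x --> +oo] --> pi / 2.
Proof.
move=> b0; have lin : (x - a) / b @[x --> +oo] --> +oo.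
  apply/cvgryPge => A; near=> x.
  rewrite ler_pdivlMr // lerBrDr; near: x; apply: nbhs_pinfty_ge; exact: num_real.
apply: (cvg_comp _ _ lin); exact: cvgy_atan.
Unshelve. all: by end_near. Qed.

Lemma cvgy_ln_ratio (a b : R) : 0 < b ->
  ln (1 + x ^+ 2) - ln ((a - x) ^+ 2 + b ^+ 2) @[x --> +oo] --> (0 : R).
Proof.
move=> b0.
have num0 (x : R) : 0 < 1 + x ^+ 2 by rewrite ltr_pwDl ?sqr_ge0.
have den0 (x : R) : 0 < (a - x) ^+ 2 + b ^+ 2 by rewrite ltr_pwDr ?sqr_ge0 ?exprn_gt0.
have -> : (fun x => ln (1 + x ^+ 2) - ln ((a - x) ^+ 2 + b ^+ 2)) =
    (fun x => ln ((1 + x ^+ 2) / ((a - x) ^+ 2 + b ^+ 2))).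
  by apply/funext => x; rewrite ln_div // posrE.
have ratio1 : (1 + x ^+ 2) / ((a - x) ^+ 2 + b ^+ 2) @[x --> +oo] --> (1 : R).
  have := @cvgy_rational ('X^2 + 1) ((a *: 'X - 1) ^+ 2 + b ^+ 2 *: 'X^2)
    (fun x => (1 + x ^+ 2) / ((a - x) ^+ 2 + b ^+ 2)).
  rewrite !hornerE /= expr0n /= !mulr0 sqrrN expr1n !addr0 add0r divr1.
  apply; first exact: oner_neq0.
  near=> x.
  have x0 : x != 0 by apply/lt0r_neq0; near: x; apply: nbhs_pinfty_gt.
  rewrite !hornerE /=.
  by field; rewrite x0 mulN1r lt0r_neq0 // den0.
by have := cvg_comp _ _ ratio1 (@continuous_ln R 1 ltr01); rewrite ln1.
Unshelve. all: by end_near. Qed.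

Lemma cvgy_rational_oneDsqr (d e : R) :
  (d * x + e) / (1 + x ^+ 2) @[x --> +oo] --> (0 : R).
Proof.
have := @cvgy_rational (d *: 'X + e *: 'X^2) ('X^2 + 1)
  (fun x => (d * x + e) / (1 + x ^+ 2)).
rewrite !hornerE /= expr0n /= !mulr0 add0r mul0r.
apply; first exact: oner_neq0.
near=> x.
have x0 : x != 0 by apply/lt0r_neq0; near: x; apply: nbhs_pinfty_gt.
rewrite !hornerE /=.
by field; rewrite x0 /= lt0r_neq0 // ltr_pwDl ?sqr_ge0.
Unshelve. all: by end_near. Qed.

End limits_at_infinity.

Section cauchy_primitive.
Context {R : realType}.

Lemma is_derive1_ln_comp (g : R -> R) (x dg : R) : 0 < g x ->
  is_derive x 1 g dg -> is_derive x 1 (fun y => ln (g y)) (dg / g x).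
Proof. by move=> g0 dgx; have := is_derive1_comp (is_derive1_ln g0) dgx; rewrite mulrC. Qed.

Lemma is_derive1_atan_comp (g : R -> R) (x dg : R) :
  is_derive x 1 g dg -> is_derive x 1 (fun y => atan (g y)) (dg / (1 + g x ^+ 2)).
Proof. by move=> dgx; have := is_derive1_comp (is_derive1_atan (g x)) dgx; rewrite mulrC. Qed.

Lemma cauchy_int_FTC (g F : R -> R) (M l1 l0 : R) : 0 <= M ->
  (forall x, - M <= g x) -> continuous g ->
  (forall x : R, is_derive x 1 F (g x * (pi * (1 + x ^+ 2))^-1)) ->
  F x @[x --> +oo] --> l1 -> F x @[x --> -oo] --> l0 ->
  cauchy_int g = l1 - l0.
Proof.
move=> M0 gM cg dF Fl1 Fl0.
have pi0 : 0 < pi :> R := pi_gt0 R.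
have oneDsqr0 (x : R) : 0 < 1 + x ^+ 2 by rewrite ltr_pwDl ?sqr_ge0.
rewrite /cauchy_int (@continuous_FTC2T _ _ F l1 l0 (M / pi)) ?divr_ge0 ?(ltW pi0) //.
- move=> x; have rho0 : 0 <= (pi * (1 + x ^+ 2))^-1.
    by rewrite invr_ge0 ltW // mulr_gt0.
  by have := ler_wpM2r rho0 (gM x); rewrite mulNr invfM mulrA.
- move=> x; apply: cvgM; first exact: cg.
  apply: cvgV; first by rewrite lt0r_neq0 // mulr_gt0.
  apply: cvgM; first exact: cvg_cst.
  exact: continuous_oneDsqr.
Qed.

(* Antiderivatives of the partial fractions with poles [±i] and [a ± ib];
   [δ] and [ε] are only needed when these poles coincide. *)
Definition cauchy_primitive (a b α β γ δ ε x : R) : R :=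
  α * (ln (1 + x ^+ 2) - ln ((a - x) ^+ 2 + b ^+ 2))
  + β * atan x + γ * atan ((x - a) / b) + (δ * x + ε) / (1 + x ^+ 2).

Definition cauchy_primitive_deriv (a b α β γ δ ε x : R) : R :=
  2 * α * (x / (1 + x ^+ 2) - (x - a) / ((a - x) ^+ 2 + b ^+ 2))
  + β / (1 + x ^+ 2) + γ * b / ((a - x) ^+ 2 + b ^+ 2)
  + (δ * (1 - x ^+ 2) - 2 * ε * x) / (1 + x ^+ 2) ^+ 2.

Lemma is_derive_cauchy_primitive (a b α β γ δ ε x : R) : 0 < b ->
  is_derive x 1 (cauchy_primitive a b α β γ δ ε)
    (cauchy_primitive_deriv a b α β γ δ ε x).
Proof.
move=> b0.
have num0 : 0 < 1 + x ^+ 2 by rewrite ltr_pwDl ?sqr_ge0.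
have den0 : 0 < (a - x) ^+ 2 + b ^+ 2 by rewrite ltr_pwDr ?sqr_ge0 ?exprn_gt0.
have sE (u v : R) : u *: v = u * v by [].
have d1 : is_derive x 1 (fun y => 1 + y ^+ 2) (2 * x).
  by apply: is_derive_eq; rewrite !sE; ring.
have d2 : is_derive x 1 (fun y => (a - y) ^+ 2 + b ^+ 2) (2 * (x - a)).
  by apply: is_derive_eq; rewrite !sE; ring.
have d3 : is_derive x 1 (fun y => (y - a) / b) b^-1.
  by apply: is_derive_eq; rewrite !sE; ring.
(* These facts are picked up by instance resolution in [is_derive_eq]. *)
have dV := @is_deriveV _ (fun y => 1 + y ^+ 2) x _ 1 (lt0r_neq0 num0) d1.
have l1 := @is_derive1_ln_comp (fun y => 1 + y ^+ 2) x _ num0 d1.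
have l2 := @is_derive1_ln_comp (fun y => (a - y) ^+ 2 + b ^+ 2) x _ den0 d2.
have t3 := @is_derive1_atan_comp (fun y => (y - a) / b) x _ d3.
rewrite /cauchy_primitive; apply: is_derive_eq.
rewrite /cauchy_primitive_deriv !sE.
by field; rewrite !lt0r_neq0.
Qed.

Lemma cvgy_cauchy_primitive (a b α β γ δ ε : R) : 0 < b ->
  cauchy_primitive a b α β γ δ ε x @[x --> +oo] --> (β + γ) * (pi / 2).
Proof.
move=> b0.
have -> : (β + γ) * (pi / 2) = α * 0 + β * (pi / 2) + γ * (pi / 2) + 0 by ring.
apply: cvgD; last exact: cvgy_rational_oneDsqr.
apply: cvgD; last by apply: cvgM; [exact: cvg_cst | exact: cvgy_lin_atan].
apply: cvgD; last by apply: cvgM; [exact: cvg_cst | exact: cvgy_atan].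
by apply: cvgM; [exact: cvg_cst | exact: cvgy_ln_ratio].
Qed.

Lemma cauchy_primitiveN (a b α β γ δ ε x : R) :
  cauchy_primitive a b α β γ δ ε (- x) =
  cauchy_primitive (- a) b α (- β) (- γ) (- δ) ε x.
Proof.
rewrite /cauchy_primitive.
have -> : - x - a = - (x - - a) by ring.
have -> : a - - x = - (- a - x) by ring.
by rewrite !sqrrN mulNr !atanN; ring.
Qed.

Lemma cvgNy_cauchy_primitive (a b α β γ δ ε : R) : 0 < b ->
  cauchy_primitive a b α β γ δ ε x @[x --> -oo] --> - ((β + γ) * (pi / 2)).
Proof.
move=> b0; apply/cvgNy_compNP.
have -> : cauchy_primitive a b α β γ δ ε \o -%R =
    cauchy_primitive (- a) b α (- β) (- γ) (- δ) ε.
  by apply/funext => x; exact: cauchy_primitiveN.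
by rewrite -mulNr opprD; exact: cvgy_cauchy_primitive.
Qed.

Lemma cauchy_int_by_primitive (g : R -> R) (M a b α β γ δ ε : R) :
  0 < b -> 0 <= M -> (forall x, - M <= g x) -> continuous g ->
  (forall x, cauchy_primitive_deriv a b α β γ δ ε x = g x / (1 + x ^+ 2)) ->
  cauchy_int g = β + γ.
Proof.
move=> b0 M0 gM cg dg.
have pi0 : pi != 0 :> R by rewrite lt0r_neq0 // pi_gt0.
have dF (x : R) : is_derive x 1 (fun y => pi^-1 * cauchy_primitive a b α β γ δ ε y)
    (g x * (pi * (1 + x ^+ 2))^-1).
  have dP := is_derive_cauchy_primitive a α β γ δ ε x b0.
  by apply: is_derive_eq; rewrite dg invfM mulrCA.
have lim_scale (l : R) (F : R -> R) (D : set_system R) (FD : Filter D) :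
    F x @[x --> D] --> l -> pi^-1 * F x @[x --> D] --> pi^-1 * l.
  by move=> Fl; apply: cvgM => //; exact: cvg_cst.
rewrite (cauchy_int_FTC M0 gM cg dF
  (lim_scale _ _ _ _ (cvgy_cauchy_primitive _ _ _ _ b0))
  (lim_scale _ _ _ _ (cvgNy_cauchy_primitive _ _ _ _ b0))).
by rewrite -mulrBr opprK -mulrDr -splitr mulrCA mulVf ?mulr1.
Qed.

End cauchy_primitive.

Section cauchy_transform.
Context {R : realType}.
Variables (a b : R).
Hypothesis b_gt0 : 0 < b.

Let den_gt0 x : 0 < (a - x) ^+ 2 + b ^+ 2.
Proof. by rewrite ltr_pwDr ?sqr_ge0 ?exprn_gt0. Qed.

Let oneDsqr_gt0 (x : R) : 0 < 1 + x ^+ 2.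
Proof. by rewrite ltr_pwDl ?sqr_ge0. Qed.

(* [(a^2 + b^2 - 1)^2 + 4 a^2 = (a^2 + (b - 1)^2) (a^2 + (b + 1)^2)] vanishes
   exactly when the poles [a + ib] and [i] coincide. *)
Lemma cauchy_disc_gt0 : (a, b) != (0, 1) -> 0 < (a ^+ 2 + b ^+ 2 - 1) ^+ 2 + 4 * a ^+ 2.
Proof.
rewrite xpair_eqE negb_and; have [->|a0] /= := eqVneq a 0.
  rewrite expr0n /= mulr0 addr0 add0r => b1.
  rewrite exprn_even_gt0 // subr_eq0 sqrf_eq1 negb_or b1 /=.
  by apply: contraTneq b_gt0 => ->; rewrite ltr0N1.
by move=> _; rewrite ltr_pwDr ?sqr_ge0 // mulr_gt0 // exprn_even_gt0.
Qed.

Lemma continuous_poisson : continuous (fun x => ((a - x) ^+ 2 + b ^+ 2)^-1).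
Proof.
apply: continuous_of_derivable => x.
by apply: derivableV => //; rewrite lt0r_neq0.
Qed.

Lemma continuous_conj_poisson :
  continuous (fun x => (a - x) / ((a - x) ^+ 2 + b ^+ 2)).
Proof.
apply: continuous_of_derivable => x; apply: derivableM => //.
by apply: derivableV => //; rewrite lt0r_neq0.
Qed.

Lemma cauchy_int_poisson :
  cauchy_int (fun x => ((a - x) ^+ 2 + b ^+ 2)^-1) =
  (b + 1) / (b * ((b + 1) ^+ 2 + a ^+ 2)).
Proof.
have g_ge0 x : - 0 <= ((a - x) ^+ 2 + b ^+ 2)^-1 by rewrite oppr0 invr_ge0 ltW.
have [[a0 b1]|ab] := eqVneq (a, b) (0, 1).
  rewrite (cauchy_int_by_primitive (M := 0) (a := a) (b := b) (α := 0)
    (β := 2^-1) (γ := 0) (δ := 2^-1) (ε := 0)) //.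
  - by rewrite a0 b1; field.
  - exact: continuous_poisson.
  - move=> x; rewrite /cauchy_primitive_deriv a0 b1.
    by field; rewrite lt0r_neq0.
pose D := (a ^+ 2 + b ^+ 2 - 1) ^+ 2 + 4 * a ^+ 2.
have D0 : 0 < D := cauchy_disc_gt0 ab.
rewrite (cauchy_int_by_primitive (M := 0) (a := a) (b := b) (α := a / D)
  (β := (a ^+ 2 + b ^+ 2 - 1) / D) (γ := (1 + a ^+ 2 - b ^+ 2) / (b * D))
  (δ := 0) (ε := 0)) //.
- have ab0 : 0 < (b + 1) ^+ 2 + a ^+ 2.
    exact: ltr_pwDl (exprn_gt0 2 (addr_gt0 b_gt0 ltr01)) (sqr_ge0 a).
  by rewrite /D; field; rewrite !lt0r_neq0.
- exact: continuous_poisson.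
- by move=> x; rewrite /cauchy_primitive_deriv /D; field; rewrite !lt0r_neq0.
Qed.

Lemma conj_poisson_ge x : - (2 * b)^-1 <= (a - x) / ((a - x) ^+ 2 + b ^+ 2).
Proof.
have E : (a - x) / ((a - x) ^+ 2 + b ^+ 2) + (2 * b)^-1 =
    (a - x + b) ^+ 2 / (2 * b * ((a - x) ^+ 2 + b ^+ 2)).
  by field; rewrite !lt0r_neq0.
by rewrite -subr_ge0 opprK E divr_ge0 ?sqr_ge0 // ltW // !mulr_gt0.
Qed.

Lemma cauchy_int_conj_poisson :
  cauchy_int (fun x => (a - x) / ((a - x) ^+ 2 + b ^+ 2)) =
  a / (a ^+ 2 + (b + 1) ^+ 2).
Proof.
have M0 : 0 <= (2 * b)^-1 by rewrite invr_ge0 ltW // mulr_gt0.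
have [[a0 b1]|ab] := eqVneq (a, b) (0, 1).
  rewrite (cauchy_int_by_primitive (M := (2 * b)^-1) (a := a) (b := b) (α := 0)
    (β := 0) (γ := 0) (δ := 0) (ε := 2^-1)) //.
  - by rewrite a0 mul0r addr0.
  - exact: conj_poisson_ge.
  - exact: continuous_conj_poisson.
  - move=> x; rewrite /cauchy_primitive_deriv a0 b1.
    by field; rewrite lt0r_neq0.
pose D := (a ^+ 2 + b ^+ 2 - 1) ^+ 2 + 4 * a ^+ 2.
have D0 : 0 < D := cauchy_disc_gt0 ab.
pose A := (2 * a ^+ 2 - (a ^+ 2 + b ^+ 2) + 1) / D.
pose B := a * (a ^+ 2 + b ^+ 2 + 1) / D.
rewrite (cauchy_int_by_primitive (M := (2 * b)^-1) (a := a) (b := b) (α := A / 2)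
  (β := B) (γ := (a - (a ^+ 2 + b ^+ 2) * B - A * a) / b) (δ := 0) (ε := 0)) //.
- have ab0 : 0 < a ^+ 2 + (b + 1) ^+ 2.
    exact: ltr_pwDr (exprn_gt0 2 (addr_gt0 b_gt0 ltr01)) (sqr_ge0 a).
  by rewrite /A /B /D; field; rewrite !lt0r_neq0.
- exact: conj_poisson_ge.
- exact: continuous_conj_poisson.
- move=> x; rewrite /cauchy_primitive_deriv /A /B /D.
  by field; rewrite !lt0r_neq0.
Qed.

End cauchy_transform.

Section cauchy_v_t.
Context {R : realType}.
Variable t : R.
Hypothesis t_gt0 : 0 < t.

Definition vt_cubic (a v : R) : R := v * (v + 1) ^+ 2 + a ^+ 2 * v - t * (v + 1).

Lemma vt_cubic_ratio_lt a x y : 0 < x -> x < y ->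
  vt_cubic a x * (y + 1) < vt_cubic a y * (x + 1).
Proof.
move=> x0 xy; rewrite -subr_gt0.
have -> : vt_cubic a y * (x + 1) - vt_cubic a x * (y + 1) =
    (y - x) * ((x + 1) * (y + 1) * (x + y + 1) + a ^+ 2) by rewrite /vt_cubic; ring.
by rewrite mulr_gt0 ?subr_gt0 // ltr_wpDr ?sqr_ge0 // !mulr_gt0 //; lra.
Qed.

Lemma vt_cubic_root a : exists2 r, 0 < r & vt_cubic a r = 0.
Proof.
have cQ : continuous (vt_cubic a) by apply: continuous_of_derivable.
have Q0 : vt_cubic a 0 = - t by rewrite /vt_cubic; ring.
have Qt : vt_cubic a t = t * t * (t + 1) + a ^+ 2 * t by rewrite /vt_cubic; ring.
have [r] : exists2 r, r \in `[0, t] & vt_cubic a r = 0.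
  apply: IVT; first exact: ltW.
    exact: continuous_subspaceT.
  rewrite Q0 Qt ge_min le_max oppr_le0 (ltW t_gt0) /=.
  by apply/orP; right; rewrite addr_ge0 // mulr_ge0 ?sqr_ge0 ?mulr_ge0 ?addr_ge0 // ltW.
rewrite in_itv /= => /andP[r0 _] Qr; exists r => //; rewrite lt_neqAle r0 andbT.
by apply: contra_eq_neq Qr => <-; rewrite Q0 oppr_eq0 lt0r_neq0.
Qed.

Lemma cauchy_int_poisson_le a v : 0 < v ->
  (cauchy_int (fun x => ((a - x) ^+ 2 + v ^+ 2)^-1) <= t^-1) = (0 <= vt_cubic a v).
Proof.
move=> v0; rewrite cauchy_int_poisson //.
have W0 : 0 < v * ((v + 1) ^+ 2 + a ^+ 2).
  by rewrite mulr_gt0 // ltr_pwDl ?sqr_ge0 // exprn_gt0 // addr_gt0.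
rewrite ler_pdivrMr // mulrC ler_pdivlMr // -subr_ge0.
by congr (0 <= _); rewrite /vt_cubic; ring.
Qed.

Lemma v_t_cauchy a r : 0 < r -> vt_cubic a r = 0 -> v_t (@cauchy_int R) t a = r.
Proof.
move=> r0 Qr; rewrite /v_t; set S := [set v | _].
have Sr : S r by split => //; rewrite cauchy_int_poisson_le // Qr.
have lbS : lbound S r.
  move=> v [v0]; rewrite cauchy_int_poisson_le // => Qv.
  rewrite leNgt; apply/negP => vr.
  have := vt_cubic_ratio_lt a v0 vr; rewrite Qr mul0r ltNge.
  by rewrite mulr_ge0 // addr_ge0 // ltW.
apply/eqP; rewrite eq_le ge_inf //=; last by exists r.
by apply: lb_le_inf => //; exists r.
Qed.

Lemma f_t_cauchy a r : 0 < r -> vt_cubic a r = 0 -> f_t (@cauchy_int R) t a = a / (r + 1).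
Proof.
move=> r0 Qr; rewrite /f_t /ReH (v_t_cauchy r0 Qr) cauchy_int_conj_poisson //.
have Qr0 : 0 < a ^+ 2 + (r + 1) ^+ 2.
  by rewrite ltr_wpDl ?sqr_ge0 // exprn_gt0 // addr_gt0.
have r10 : r + 1 != 0 by rewrite lt0r_neq0 // addr_gt0.
transitivity (a / (r + 1) + a * vt_cubic a r / ((r + 1) * (a ^+ 2 + (r + 1) ^+ 2))).
  by rewrite /vt_cubic; field; rewrite r10 lt0r_neq0.
by rewrite Qr mulr0 mul0r addr0.
Qed.

Lemma vt_cubic_scaled u r :
  vt_cubic (u * (r + 1)) r = (r + 1) * (r * (r + 1) * (u ^+ 2 + 1) - t).
Proof. by rewrite /vt_cubic; ring. Qed.

Lemma f_t_cauchy_scaled u w : 0 < w -> w * (w + 1) * (u ^+ 2 + 1) = t ->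
  f_t (@cauchy_int R) t (u * (w + 1)) = u.
Proof.
move=> w0 hw; rewrite (@f_t_cauchy _ w) ?mulfK ?lt0r_neq0 ?addr_gt0 //.
by rewrite vt_cubic_scaled hw subrr mulr0.
Qed.

Lemma v_t_cauchy_fiber u a w : 0 < w -> w * (w + 1) * (u ^+ 2 + 1) = t ->
  f_t (@cauchy_int R) t a = u -> v_t (@cauchy_int R) t a = w.
Proof.
move=> w0 hw fa; have [r r0 Qr] := vt_cubic_root a.
have r1 : 0 < r + 1 by rewrite addr_gt0.
have aE : a = u * (r + 1) by rewrite -fa (f_t_cauchy r0 Qr) divfK ?lt0r_neq0.
have hr : r * (r + 1) * (u ^+ 2 + 1) = t.
  have := Qr; rewrite aE vt_cubic_scaled => /eqP.
  by rewrite mulf_eq0 (negbTE (lt0r_neq0 r1)) subr_eq0 => /eqP.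
rewrite (v_t_cauchy r0 Qr); apply/eqP; rewrite -subr_eq0.
have s0 : 0 < u ^+ 2 + 1 by rewrite ltr_pwDr ?ltr01 ?sqr_ge0.
have pos : 0 < (r + w + 1) * (u ^+ 2 + 1) by rewrite mulr_gt0 // !addr_gt0.
have : (r - w) * ((r + w + 1) * (u ^+ 2 + 1)) =
    r * (r + 1) * (u ^+ 2 + 1) - w * (w + 1) * (u ^+ 2 + 1) by ring.
by rewrite hr hw subrr => /eqP; rewrite mulf_eq0 (negbTE (lt0r_neq0 pos)) orbF.
Qed.

Lemma mulD1_sqrt_root s w : 0 < s ->
  w = 2 * t / (Num.sqrt s * (Num.sqrt s + Num.sqrt (s + 4 * t))) ->
  0 < w /\ w * (w + 1) * s = t.
Proof.
move=> s0 ->; have s4t0 : 0 < s + 4 * t by rewrite addr_gt0 // mulr_gt0.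
have := sqr_sqrtr (ltW s0); have := sqr_sqrtr (ltW s4t0).
have := sqrtr_gt0 s; have := sqrtr_gt0 (s + 4 * t); rewrite s0 s4t0.
move: (Num.sqrt s) (Num.sqrt (s + 4 * t)) => p q q0 p0 qq pp.
split; first by rewrite !divr_gt0 ?mulr_gt0 ?addr_gt0.
have -> : t = (q ^+ 2 - p ^+ 2) / 4 by rewrite qq pp; field.
by rewrite -pp; field; rewrite !lt0r_neq0 ?addr_gt0.
Qed.

End cauchy_v_t.

Theorem lemma6p10 (R : realType) (t : R) (ht : 0 < t) (u : R) :
  phi_t (@cauchy_int R) t u =
  4 * t / (Num.sqrt (u ^+ 2 + 1) *
           (Num.sqrt (u ^+ 2 + 1) + Num.sqrt (u ^+ 2 + 1 + 4 * t))).
Proof.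
have s0 : 0 < u ^+ 2 + 1 by rewrite ltr_pwDr ?ltr01 ?sqr_ge0.
pose w := 2 * t / (Num.sqrt (u ^+ 2 + 1) *
  (Num.sqrt (u ^+ 2 + 1) + Num.sqrt (u ^+ 2 + 1 + 4 * t))).
have [w0 hw] := mulD1_sqrt_root ht s0 (erefl w).
have ex : exists a, f_t (@cauchy_int R) t a = u.
  by exists (u * (w + 1)); exact: f_t_cauchy_scaled.
rewrite /phi_t /f_t_inv (v_t_cauchy_fiber ht w0 hw (xgetPex 0 ex)) /w.
by rewrite !mulrA -natrM.
Qed.
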